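(* Let $n\ge 3$ and $J=(x_n+y_n)+I_{n-2}\subseteq R$. Then $J:x_n=\mathfrak p^{+}$.
   Context: Let $\Bbbk$ be a field and $R=\Bbbk[x_1,\dots,x_n,y_1,\dots,y_n]$. For $1\le i<j\le n$ put $f_{ij}=x_iy_j-x_jy_i$ and $g_{ij}=x_ix_j-y_iy_j$. Let $\mathcal I_{K_n}=(g_{ij}\mid 1\le i<j\le n)$. Define $I_0=\mathcal I_{K_n}$ and inductively $I_k=I_{k-1}+(f_{kn})$ for $1\le k\le n-1$. Let $\mathfrak p^{+}=(x_i+y_i\mid i\in[n])$. *)

From HB Require Import structures.
From mathcomp Require Import all_boot all_order all_algebra.
Set Implicit Arguments. Unset Strict Implicit. Unset Printing Implicit Defensive.
Import GRing.Theory.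
Local Open Scope ring_scope.

Fixpoint mpoly (K : comNzRingType) (m : nat) : comNzRingType :=
  match m with
  | 0 => K
  | m'.+1 => {poly mpoly K m'}
  end.

(* the variable z_i of mpoly K m (for i < m); 0 if i >= m *)
Fixpoint mvar (K : comNzRingType) (m : nat) (i : nat) {struct m} : mpoly K m :=
  match m return mpoly K m with
  | 0 => 0
  | m'.+1 => if i == m' then 'X else (mvar K m' i)%:P
  end.

Definition in_ideal (A : comNzRingType) (s : seq A) (f : A) : Prop :=
  exists c : nat -> A, f = \sum_(i < size s) c i * s`_i.

Definition in_colon (A : comNzRingType) (s : seq A) (a f : A) : Prop :=
  in_ideal s (a * f).

Section Ring.
Variables (k : fieldType) (n : nat).

(* R = k[x_1..x_n, y_1..y_n]; x_i = z_{i-1}, y_i = z_{n+i-1} (1-based i) *)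
Definition R : comNzRingType := mpoly k (n + n).
Definition xv (i : nat) : R := mvar k (n + n) i.-1.
Definition yv (i : nat) : R := mvar k (n + n) (n + i.-1).

Definition fij (i j : nat) : R := xv i * yv j - xv j * yv i.
Definition gij (i j : nat) : R := xv i * xv j - yv i * yv j.

Definition IKn_gens : seq R :=
  [seq gij ij.1 ij.2 |
     ij <- [seq (i, j) | i <- iota 1 n, j <- iota 1 n] & (ij.1 < ij.2)%N].

Fixpoint I_gens (m : nat) : seq R :=
  match m with
  | 0 => IKn_gens
  | m'.+1 => I_gens m' ++ [:: fij m'.+1 n]
  end.

Definition J_gens : seq R := (xv n + yv n) :: I_gens (n - 2).

Definition pplus_gens : seq R := [seq xv i + yv i | i <- iota 1 n].

End Ring.

(* Let σ be the substitution x_i ↦ x_i, y_i ↦ -x_i.  It kills x_n + y_n and every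
   f_ij, g_ij, hence all of J, and h ≡ σ h modulo p^+ for every h.  So if x_n f ∈ J
   then x_n σ(f) = 0, whence σ(f) = 0 because x_n is regular, and f ∈ p^+.
   Conversely x_n (x_j + y_j) = g_jn + y_j (x_n + y_n) lies in J for j < n. *)
From HB Require Import structures.
From mathcomp Require Import all_boot all_order all_algebra.
From mathcomp Require Import ring.
Set Implicit Arguments. Unset Strict Implicit. Unset Printing Implicit Defensive.
Import GRing.Theory.
Local Open Scope ring_scope.

Section IteratedPolynomials.
Variable K : comNzRingType.

Fixpoint mpolyC (m : nat) : {rmorphism K -> mpoly K m} :=
  match m return {rmorphism K -> mpoly K m} with
  | 0 => (idfun : {rmorphism K -> K})
  | m'.+1 => (polyC \o mpolyC m' : {rmorphism K -> {poly mpoly K m'}})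
  end.

Lemma mpoly_ind m (P : mpoly K m -> Prop) :
  (forall a b, P a -> P b -> P (a + b)) ->
  (forall a b, P a -> P b -> P (a * b)) ->
  (forall a, P (mpolyC m a)) ->
  (forall i, (i < m)%N -> P (mvar K m i)) -> forall h, P h.
Proof.
elim: m P => [|m IH] P PD PM PC Pvar h; first exact: (PC h).
have PpolyC q : P q%:P.
  apply: (IH (fun q => P q%:P)) => [a b ha hb|a b ha hb|a|i ltim].
  - by rewrite polyCD; apply: PD.
  - by rewrite polyCM; apply: PM.
  - exact: (PC a).
  - by have := Pvar i (ltnW ltim); rewrite /= (ltn_eqF ltim).
have PXn i : P 'X^i.
  elim: i => [|i IHi]; first by rewrite expr0 -polyC1.
  by rewrite exprS; apply: PM => //; have := Pvar m (ltnSn m); rewrite /= eqxx.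
rewrite -[h]coefK poly_def; apply: (big_ind P) => [|//|i _].
- by rewrite -polyC0.
- by rewrite -mul_polyC; apply: PM.
Qed.

Lemma mvar_lreg m i : (i < m)%N -> GRing.lreg (mvar K m i).
Proof.
elim: m => [//|m IH] ltim /=; case: eqP => [_|/eqP neq_im].
  exact/monic_lreg/monicX.
by apply: lreg_lead; rewrite lead_coefC; apply: IH; rewrite ltn_neqAle neq_im -ltnS.
Qed.

Section Evaluation.
Variables (S : comNzRingType) (c : {rmorphism K -> S}) (val : nat -> S).

Fixpoint mpoly_eval (m : nat) : {rmorphism mpoly K m -> S} :=
  match m return {rmorphism mpoly K m -> S} with
  | 0 => c
  | m'.+1 =>
      horner_morph (fun x => mulrC (val m') (mpoly_eval m' x)) : {rmorphism _ -> _}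
  end.

Lemma mpoly_evalC m a : mpoly_eval m (mpolyC m a) = c a.
Proof. by elim: m => [|m IH] //=; rewrite horner_morphC. Qed.

Lemma mpoly_eval_mvar m i : (i < m)%N -> mpoly_eval m (mvar K m i) = val i.
Proof.
elim: m => [//|m IH] ltim /=; case: eqP => [->|/eqP neq_im].
  by rewrite horner_morphX.
by rewrite horner_morphC IH // ltn_neqAle neq_im -ltnS.
Qed.

End Evaluation.
End IteratedPolynomials.

Section Ideals.
Variable A : comNzRingType.
Implicit Types (s t : seq A) (a b f : A).

Lemma in_ideal0 s : in_ideal s 0.
Proof. by exists (fun=> 0); rewrite big1 // => i _; rewrite mul0r. Qed.

Lemma in_idealD s a b : in_ideal s a -> in_ideal s b -> in_ideal s (a + b).
Proof.
move=> [ca ->] [cb ->]; exists (fun i => ca i + cb i).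
by rewrite -big_split; apply: eq_bigr => i _; rewrite mulrDl.
Qed.

Lemma in_idealMl s a b : in_ideal s b -> in_ideal s (a * b).
Proof.
move=> [cb ->]; exists (fun i => a * cb i).
by rewrite mulr_sumr; apply: eq_bigr => i _; rewrite mulrA.
Qed.

Lemma in_ideal_gen s a : a \in s -> in_ideal s a.
Proof.
move=> sa; exists (fun i => (i == index a s :> nat)%:R).
rewrite (bigD1 (Ordinal (etrans (index_mem a s) sa))) //= eqxx mul1r nth_index //.
by rewrite big1 ?addr0 // => i /negbTE; rewrite -val_eqE /= => ->; rewrite mul0r.
Qed.

Lemma in_colon_ideal s t a f :
  {in t, forall g, in_colon s a g} -> in_ideal t f -> in_colon s a f.
Proof.
move=> colon_t [cf ->]; rewrite /in_colon mulr_sumr.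
apply: (big_ind (in_ideal s)) => [||i _]; [exact: in_ideal0|exact: in_idealD|].
by rewrite mulrCA; apply/in_idealMl/colon_t/mem_nth.
Qed.

Lemma rmorph_ideal_eq0 (B : comNzRingType) (phi : {rmorphism A -> B}) s f :
  {in s, forall g, phi g = 0} -> in_ideal s f -> phi f = 0.
Proof.
move=> phi_s [cf ->]; rewrite rmorph_sum big1 // => i _.
by rewrite rmorphM /= (phi_s _ (mem_nth 0 (ltn_ord i))) mulr0.
Qed.

End Ideals.

Lemma mpoly_sub_rmorph_in_ideal (K : comNzRingType) m
    (phi : {rmorphism mpoly K m -> mpoly K m}) (s : seq (mpoly K m)) :
  (forall a, phi (mpolyC K m a) = mpolyC K m a) ->
  (forall i, (i < m)%N -> in_ideal s (mvar K m i - phi (mvar K m i))) ->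
  forall h, in_ideal s (h - phi h).
Proof.
move=> phiC phi_var; elim/mpoly_ind => [a b ha hb|a b ha hb|a|//].
- have -> : a + b - phi (a + b) = (a - phi a) + (b - phi b).
    by rewrite rmorphD /=; ring.
  exact: in_idealD.
- have -> : a * b - phi (a * b) = b * (a - phi a) + phi a * (b - phi b).
    by rewrite rmorphM /=; ring.
  by apply: in_idealD; apply: in_idealMl.
- by rewrite phiC subrr; apply: in_ideal0.
Qed.

Section Colon.
Variables (k : fieldType) (n : nat).
Hypothesis n_gt0 : (0 < n)%N.
Local Notation N := (n + n)%N.
Local Notation x := (xv k n).
Local Notation y := (yv k n).

Definition subst_y_image (i : nat) : R k n :=
  if (i < n)%N then mvar k N i else - mvar k N (i - n).

Definition subst_y : {rmorphism R k n -> R k n} := mpoly_eval (mpolyC k N) subst_y_image N.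

Lemma predn_lt i : (i <= n)%N -> (i.-1 < n)%N.
Proof. by case: i => [|i] //= _; rewrite n_gt0. Qed.

Lemma subst_y_xv i : (i <= n)%N -> subst_y (x i) = x i.
Proof.
move=> le_in; rewrite /subst_y /xv mpoly_eval_mvar.
  by rewrite /subst_y_image predn_lt.
exact: leq_trans (predn_lt le_in) (leq_addr _ _).
Qed.

Lemma subst_y_yv i : (i <= n)%N -> subst_y (y i) = - x i.
Proof.
move=> le_in; rewrite /subst_y /yv mpoly_eval_mvar; last by rewrite ltn_add2l predn_lt.
by rewrite /subst_y_image ltnNge leq_addr /= addKn.
Qed.

Lemma subst_y_gij i j : (i <= n)%N -> (j <= n)%N -> subst_y (gij k n i j) = 0.
Proof.
move=> le_in le_jn; rewrite /gij rmorphB !rmorphM /=.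
by rewrite !subst_y_xv // !subst_y_yv // mulrNN subrr.
Qed.

Lemma subst_y_fij i j : (i <= n)%N -> (j <= n)%N -> subst_y (fij k n i j) = 0.
Proof.
move=> le_in le_jn; rewrite /fij rmorphB !rmorphM /=.
by rewrite !subst_y_xv // !subst_y_yv // !mulrN opprK mulrC addrC subrr.
Qed.

Lemma IKn_gensP g : g \in IKn_gens k n ->
  exists i j, [/\ (i <= n)%N, (j <= n)%N & g = gij k n i j].
Proof.
case/mapP=> [[i j]]; rewrite mem_filter /= => /andP[_ /allpairsP[[a b] [ia jb /= [-> ->]]]] ->.
by move: ia jb; rewrite !mem_iota !add1n !ltnS => /andP[_ ?] /andP[_ ?]; exists a, b.
Qed.

Lemma subst_y_I_gens m g : (m <= n)%N -> g \in I_gens k n m -> subst_y g = 0.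
Proof.
elim: m g => [|m IH] g le_mn /=.
  by case/IKn_gensP=> [i [j [le_in le_jn ->]]]; apply: subst_y_gij.
rewrite mem_cat => /orP[/IH -> //|]; first exact: ltnW.
by rewrite inE => /eqP ->; apply: subst_y_fij.
Qed.

Lemma subst_y_J_gens : {in J_gens k n, forall g, subst_y g = 0}.
Proof.
move=> g; rewrite inE => /orP[/eqP ->|]; last exact/subst_y_I_gens/leq_subr.
by rewrite rmorphD /= subst_y_xv // subst_y_yv // subrr.
Qed.

Lemma sub_subst_y_in_pplus h : in_ideal (pplus_gens k n) (h - subst_y h).
Proof.
apply: mpoly_sub_rmorph_in_ideal => [a|i ltiN]; first exact: mpoly_evalC.
rewrite /subst_y mpoly_eval_mvar // /subst_y_image; case: ifP => [_|/negbT].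
  by rewrite subrr; apply: in_ideal0.
rewrite -leqNgt opprK addrC => le_ni; apply: in_ideal_gen.
have -> : mvar k N (i - n) = x (i - n).+1 by [].
have -> : mvar k N i = y (i - n).+1 by rewrite /yv /= subnKC.
by apply: map_f; rewrite mem_iota add1n !ltnS /= ltn_subLR.
Qed.

Lemma xv_n_lreg : GRing.lreg (x n).
Proof. exact/mvar_lreg/(leq_trans (predn_lt (leqnn n)))/leq_addr. Qed.

Lemma IKn_gens_gij i j : (1 <= i < j)%N -> (j <= n)%N -> gij k n i j \in IKn_gens k n.
Proof.
move=> /andP[i_gt0 lt_ij] le_jn; apply/mapP; exists (i, j) => //.
rewrite mem_filter /= lt_ij; apply/allpairsP; exists (i, j).
have le_in : (i <= n)%N := ltnW (leq_trans lt_ij le_jn).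
by rewrite !mem_iota add1n !ltnS i_gt0 le_in le_jn (leq_trans i_gt0 (ltnW lt_ij)).
Qed.

Lemma pplus_gens_in_colon : {in pplus_gens k n, forall p, in_colon (J_gens k n) (x n) p}.
Proof.
move=> p /mapP[j]; rewrite /in_colon mem_iota add1n ltnS => /andP[j_gt0 le_jn] ->.
have J_xy : in_ideal (J_gens k n) (x n + y n) by apply/in_ideal_gen/mem_head.
case: ltngtP le_jn => // [lt_jn _|-> _]; last exact: in_idealMl.
have -> : x n * (x j + y j) = gij k n j n + y j * (x n + y n) by rewrite /gij; ring.
apply/in_idealD/in_idealMl/J_xy; apply/in_ideal_gen/mem_behead => /=.
elim: (n - 2)%N => [|m IH]; last by rewrite /= mem_cat IH.
by apply: IKn_gens_gij; rewrite ?j_gt0.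
Qed.

End Colon.

Theorem lemma3p5 (k : fieldType) (n : nat) (hn : (3 <= n)%N) (f : R k n) :
  in_colon (J_gens k n) (xv k n n) f <-> in_ideal (pplus_gens k n) f.
Proof.
have n_gt0 : (0 < n)%N by apply: leq_trans hn.
split=> [xf_J|]; last exact/in_colon_ideal/pplus_gens_in_colon.
have : subst_y k n (xv k n n * f) = 0.
  exact: rmorph_ideal_eq0 (subst_y_J_gens n_gt0) xf_J.
rewrite rmorphM /= subst_y_xv // -(mulr0 (xv k n n)) => /(xv_n_lreg n_gt0) subst_f0.
by have := sub_subst_y_in_pplus f; rewrite subst_f0 subr0.
Qed.
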